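(* Every blocking set of $\operatorname{PG}(2,q)$ with at most $2q$ points contains exactly one minimal blocking set.
   Context: $q$ is a prime power and $\operatorname{PG}(2,q)$ is the incidence structure of the points and lines of $\mathbb{P}^2$ defined over $\mathbb{F}_q$. A blocking set is a set of points of $\operatorname{PG}(2,q)$ meeting every line; it is minimal if no proper subset of it is a blocking set. *)

(* PG(2,q) over a finite field F with q = #|F|. *)
From mathcomp Require Import all_boot all_order all_algebra.
Set Implicit Arguments. Unset Strict Implicit. Unset Printing Implicit Defensive.
Import GRing.Theory.
Local Open Scope ring_scope.

(* A nonzero vector of F^3 is normalized if its first nonzero coordinate is 1.
   Each 1-dimensional subspace of F^3 has exactly one normalized spanning vector,
   so normalized vectors represent the points (and, dually, the lines) of PG(2,q). *)
Definition normalized (F : finFieldType) (v : 'rV[F]_3) : bool :=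
  [exists i : 'I_3, (v 0 i == 1) && [forall j : 'I_3, (j < i)%N ==> (v 0 j == 0)]].

Definition pg_point (F : finFieldType) := {v : 'rV[F]_3 | normalized v}.
Definition pg_line (F : finFieldType) := {v : 'rV[F]_3 | normalized v}.

Definition incident (F : finFieldType) (p : pg_point F) (l : pg_line F) : bool :=
  \sum_(i < 3) (val p) 0 i * (val l) 0 i == 0.

Definition blocking_set (F : finFieldType) (B : {set pg_point F}) : Prop :=
  forall l : pg_line F, exists2 p, p \in B & incident p l.

Definition minimal_blocking_set (F : finFieldType) (B : {set pg_point F}) : Prop :=
  blocking_set B /\ forall C : {set pg_point F}, C \proper B -> ~ blocking_set C.

(* For uniqueness, let M1 <>
   M2 be minimal blocking subsets of C, |C| <= 2q, and pick P in M1 \ M2, Q in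
   M2 \ M1, so that C \ P and C \ Q block. If D = C \ {P, Q} blocked, a minimal
   blocking subset of D would equal both M2 and M1 by induction on |C|.
   Otherwise every line missing D passes through P and Q, so D misses exactly
   one line: D is a blocking set of an affine plane with at most 2q - 2 points.
   This contradicts the polynomial method: a product of fewer than 3(q-1)
   linear forms sums to 0 over F^3, whereas the product of the forms w |-> x.w
   (x in D), padded to degree 2(q-1), is nonzero only on the multiples of the
   missed line, where it sums to -1 times a nonzero value, since sum_a
   a^(2(q-1)) = q - 1 = -1 in F. *)

From mathcomp Require Import all_boot all_order all_algebra.
From mathcomp Require Import finfield zify.
Set Implicit Arguments. Unset Strict Implicit. Unset Printing Implicit Defensive.
Import GRing.Theory.
Local Open Scope ring_scope.

Section PowerSums.
Variable F : finFieldType.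

Lemma natr_card : #|F|%:R = 0 :> F.
Proof.
have shift : \sum_(x : F) x = \sum_(x : F) (x + 1).
  exact: reindex_inj (addIr 1).
by move/eqP: shift; rewrite big_split sumr_const -subr_eq0 opprD addrA subrr sub0r oppr_eq0 => /eqP.
Qed.

Lemma pred_card_gt0 : (0 < #|F|.-1)%N.
Proof. by rewrite -subn1 subn_gt0 finNzRing_gt1. Qed.

Lemma expf_card_pred (x : F) : x != 0 -> x ^+ #|F|.-1 = 1.
Proof.
move=> x0; apply: (mulfI x0); rewrite mulr1 -exprS prednK ?expf_card //.
exact: ltnW (finNzRing_gt1 F).
Qed.

Lemma sum_expr_eq0 e : (e < #|F|.-1)%N -> \sum_(a : F) a ^+ e = 0.
Proof.
case: e => [_|e lt_e]; first by rewrite (eq_bigr _ (fun a _ => expr0 a)) sumr_const natr_card.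
have [c c0 ce] : exists2 c : F, c != 0 & c ^+ e.+1 != 1.
  apply/exists_inP; apply: contraTT lt_e; rewrite negb_exists_in => /forall_inP roots.
  have := @max_poly_roots _ ('X^(e.+1) - 1%:P) (enum (predC1 (0 : F))).
  rewrite -size_poly_eq0 size_XnsubC // enum_uniq -cardE cardC1 -leqNgt ltnS; apply=> //.
  apply/allP => x; rewrite mem_enum => x0; move/negPn/eqP: (roots x x0) => xe.
  by rewrite /root !hornerE xe subrr.
set S := \sum_(a : F) a ^+ e.+1.
have : S = c ^+ e.+1 * S.
  rewrite {1}/S (reindex_inj (mulfI c0)) mulr_sumr.
  by apply: eq_bigr => a _; rewrite exprMn.
move/eqP; rewrite -subr_eq0 -{1}[S]mul1r -mulrBl mulf_eq0 subr_eq0 eq_sym.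
by rewrite (negbTE ce) => /eqP.
Qed.

Lemma sum_expr_mul_pred_card k : (0 < k)%N -> \sum_(a : F) a ^+ (k * #|F|.-1) = -1.
Proof.
move=> k_gt0.
rewrite (bigD1 0) //= expr0n muln_eq0 !gtn_eqF ?pred_card_gt0 // add0r.
rewrite (eq_bigr (fun _ => 1)) => [|a a0]; last by rewrite mulnC exprM expf_card_pred ?expr1n.
rewrite sumr_const cardC1; apply/eqP; rewrite -subr_eq0 opprK -mulrSr.
by rewrite prednK ?natr_card // ltnW // finNzRing_gt1.
Qed.

End PowerSums.

Section DotProduct.
Variables (R : comPzRingType) (n : nat).

Definition dotr (u v : 'rV[R]_n) : R := \sum_i u 0 i * v 0 i.

Lemma dotrC u v : dotr u v = dotr v u.
Proof. by apply: eq_bigr => i _; rewrite mulrC. Qed.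

Lemma dotrZl a u v : dotr (a *: u) v = a * dotr u v.
Proof. by rewrite /dotr mulr_sumr; apply: eq_bigr => i _; rewrite mxE mulrA. Qed.

Lemma dotr_delta u i : dotr u (delta_mx 0 i) = u 0 i.
Proof.
rewrite /dotr (bigD1 i) //= mxE !eqxx mulr1 big1 ?addr0 // => j ji.
by rewrite mxE (negbTE ji) andbF mulr0.
Qed.

Lemma prod_dotrZl (s : seq 'rV[R]_n) a u :
  \prod_(v <- s) dotr (a *: u) v = a ^+ size s * \prod_(v <- s) dotr u v.
Proof.
elim: s => [|v s IH]; first by rewrite !big_nil mulr1.
by rewrite !big_cons IH dotrZl exprS mulrACA.
Qed.

Lemma dotr_mulmx u v : dotr u v = (u *m v^T) 0 0.
Proof. by rewrite mxE; apply: eq_bigr => i _; rewrite mxE. Qed.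

End DotProduct.

Section VanishingSums.
Variable F : finFieldType.

Lemma sum_monomial_eq0 n m (g : 'I_m -> 'I_n) : (m < n * #|F|.-1)%N ->
  \sum_(f : {ffun 'I_n -> F}) \prod_(i < m) f (g i) = 0.
Proof.
move=> lt_m; pose d j := #|[pred i | g i == j]|.
have prod_pow (f : {ffun 'I_n -> F}) : \prod_(i < m) f (g i) = \prod_(j < n) f j ^+ d j.
  rewrite (partition_big g xpredT) //=; apply: eq_bigr => j _.
  by rewrite -prodr_const; apply: eq_big => [i|i /eqP ->]; rewrite ?inE.
under eq_bigr do rewrite prod_pow.
rewrite -(bigA_distr_bigA (fun j (a : F) => a ^+ d j)) /=.
have [j lt_dj] : exists j, (d j < #|F|.-1)%N.
  apply/existsP; apply: contraTT lt_m; rewrite negb_exists -leqNgt => /forallP ge_d.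
  have <- : (\sum_(j < n) d j = m)%N.
    rewrite -[RHS]card_ord -sum1_card (partition_big g xpredT) //=.
    by apply: eq_bigr => j _; rewrite sum1_card.
  rewrite -[X in (X * _)%N]card_ord -sum_nat_const.
  by apply: leq_sum => j _; rewrite leqNgt.
by rewrite (bigD1 j) //= sum_expr_eq0 // mul0r.
Qed.

Lemma sum_prod_dotr_eq0 n (vs : seq 'rV[F]_n) : (size vs < n * #|F|.-1)%N ->
  \sum_(w : 'rV[F]_n) \prod_(v <- vs) dotr w v = 0.
Proof.
move=> lt_vs; set m := size vs in lt_vs.
rewrite (reindex (fun f : {ffun 'I_n -> F} => \row_j f j)) /=; last first.
  apply: onW_bij; exists (fun w : 'rV_n => [ffun j => w 0 j]) => [f|w].
    by apply/ffunP => j; rewrite !(mxE, ffunE).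
  by apply/rowP => j; rewrite !(mxE, ffunE).
transitivity (\sum_(f : {ffun 'I_n -> F}) \sum_(g : {ffun 'I_m -> 'I_n})
    \prod_(i < m) (f (g i) * (nth 0 vs i) 0 (g i))).
  apply: eq_bigr => f _; rewrite (big_nth 0) big_mkord /dotr bigA_distr_bigA /=.
  by apply: eq_bigr => g _; apply: eq_bigr => i _; rewrite mxE.
rewrite exchange_big big1 //= => g _.
under eq_bigr do rewrite big_split /=.
by rewrite -mulr_suml sum_monomial_eq0 ?mul0r.
Qed.

End VanishingSums.

Section ProjectivePlane.
Variable F : finFieldType.
Implicit Types (u v w : 'rV[F]_3) (p : pg_point F) (l : pg_line F).

Lemma incidentE p l : incident p l = (dotr (val p) (val l) == 0).
Proof. by []. Qed.

Lemma normalized_neq0 v : normalized v -> v != 0.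
Proof.
case/existsP => i /andP[/eqP vi _]; apply/eqP => v0.
by move/eqP: vi; rewrite v0 mxE eq_sym oner_eq0.
Qed.

Lemma normalized_scale_eq1 a v : normalized v -> normalized (a *: v) -> a = 1.
Proof.
case/existsP => i /andP[/eqP vi /forallP v_lt].
case/existsP => k /andP[/eqP avk /forallP av_lt]; rewrite mxE in avk.
have [lt_ik|lt_ki|eq_ik] := ltngtP i k.
- move: (av_lt i); rewrite lt_ik mxE vi mulr1 => /eqP a0.
  by move/eqP: avk; rewrite a0 mul0r eq_sym oner_eq0.
- move: (v_lt k); rewrite lt_ki /= => /eqP vk0.
  by move/eqP: avk; rewrite vk0 mulr0 eq_sym oner_eq0.
- by move: avk; rewrite -(val_inj eq_ik) vi mulr1.
Qed.

Lemma normalize_row w : w != 0 -> exists2 a, a != 0 & normalized (a *: w).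
Proof.
case/rV0Pn => i0 wi0; case: (@arg_minnP _ i0 (fun i => w 0 i != 0) val wi0) => i wi min_i.
exists (w 0 i)^-1; first by rewrite invr_eq0.
apply/existsP; exists i; rewrite mxE mulVf // eqxx /=.
apply/forallP => j; apply/implyP => lt_ji; rewrite mxE.
by apply: contraLR lt_ji; rewrite mulf_eq0 invr_eq0 negb_or wi -leqNgt => /min_i.
Qed.

Lemma normalized_rank2 u v :
  normalized u -> normalized v -> u != v -> \rank (col_mx u v) = 2.
Proof.
move=> nu nv neq_uv; apply/eqP; rewrite eqn_leq rank_leq_row ltnNge /=.
apply/negP => rank_le1.
have sub_u : (u <= col_mx u v)%MS by rewrite -addsmxE addsmxSl.
have : (u == col_mx u v)%MS.
  by rewrite -(mxrank_leqif_eq sub_u).2 eqn_leq mxrankS // rank_rV normalized_neq0.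
case/andP => _; rewrite col_mx_sub => /andP[_ /sub_rVP[a vE]].
have a1 : a = 1 by apply: (normalized_scale_eq1 nu); rewrite -vE.
by move: neq_uv; rewrite vE a1 scale1r eqxx.
Qed.

Lemma incident_mulmx_tr p l : incident p l -> val l *m (val p)^T = 0.
Proof. by rewrite incidentE => /eqP pl; apply/rowP => i; rewrite ord1 -dotr_mulmx dotrC pl mxE. Qed.

Lemma incident2_eq P Q l l' : P != Q ->
  incident P l -> incident Q l -> incident P l' -> incident Q l' -> l = l'.
Proof.
move=> neq_PQ Pl Ql Pl' Ql'; apply: val_inj; apply/eqP; apply: contraT => neq_ll'.
have : col_mx (val l) (val l') *m (col_mx (val P) (val Q))^T = 0.
  rewrite tr_col_mx mul_col_mx !mul_mx_row !incident_mulmx_tr //.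
  by rewrite row_mx0 col_mx0.
move/mulmx0_rank_max; rewrite mxrank_tr !normalized_rank2 //; exact: valP.
Qed.

(* Jamison's bound (also due to Brouwer and Schrijver) for blocking sets of the
   affine plane PG(2,q) \ l0. *)
Lemma affine_blocking_set_card (D : {set pg_point F}) l0 :
  {in D, forall x, ~~ incident x l0} ->
  (forall l, l != l0 -> exists2 x, x \in D & incident x l) ->
  (2 * #|F|.-1 < #|D|)%N.
Proof.
move=> missD meetD; rewrite ltnNge; apply/negP => le_D.
set c := val l0; have [i ci] := rV0Pn _ (normalized_neq0 (valP l0)).
(* Padding with a vector off l0 brings the degree to 2(q-1): a multiple of
   q - 1, so the multiples of l0 contribute, yet below 3(q-1). *)
pose vs := map val (enum D) ++ nseq (2 * #|F|.-1 - #|D|) (delta_mx 0 i).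
have size_vs : size vs = (2 * #|F|.-1)%N.
  by rewrite size_cat size_map -cardE size_nseq subnKC.
pose h w := \prod_(v <- vs) dotr w v.
have h_neq0 w : h w != 0 -> {in D, forall x, dotr w (val x) != 0}.
  rewrite prodf_seq_neq0 => /allP hw x xD.
  by apply: (hw (val x)); rewrite mem_cat map_f ?mem_enum.
have hc : h c != 0.
  rewrite prodf_seq_neq0; apply/allP => v; rewrite mem_cat.
  case/orP => [/mapP[x xD ->]|/nseqP[-> _]]; last by rewrite dotr_delta.
  by rewrite dotrC; apply: missD; rewrite -mem_enum.
have supp w : h w != 0 -> exists a, w = a *: c.
  have [->|w0 hw] := eqVneq w 0; first by exists 0; rewrite scale0r.
  have [b b0 nbw] := normalize_row w0.
  have bwE : b *: w = c.
    suff lE : exist _ (b *: w) nbw = l0 by rewrite /c -lE.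
    apply/eqP; apply: contraT => /meetD[x xD].
    by rewrite incidentE /= dotrC dotrZl mulf_eq0 (negbTE b0) (negbTE (h_neq0 w hw x xD)).
  by exists b^-1; rewrite -bwE scalerA mulVf // scale1r.
have sum_h : \sum_w h w = \sum_(a : F) h (a *: c).
  rewrite (bigID (mem [set a *: c | a in [set: F]])) /= [X in _ + X]big1 ?addr0.
    rewrite big_imset /=; first by apply: eq_bigl => a; rewrite inE.
    move=> a b _ _ /eqP; rewrite -subr_eq0 -scalerBl scaler_eq0 subr_eq0.
    by rewrite (negbTE (normalized_neq0 (valP l0))) orbF => /eqP.
  move=> w; apply: contraNeq => /supp[a ->].
  by apply: imset_f; rewrite inE.
have := @sum_prod_dotr_eq0 _ _ vs; rewrite size_vs ltn_pmul2r ?pred_card_gt0 // => /(_ isT).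
rewrite -/(\sum_w h w) sum_h.
under eq_bigr do rewrite /h prod_dotrZl size_vs.
rewrite -mulr_suml sum_expr_mul_pred_card // mulN1r.
by move/eqP; rewrite oppr_eq0; apply/negP.
Qed.

End ProjectivePlane.

Section BlockingSets.
Variable F : finFieldType.
Implicit Types (A B C M N : {set pg_point F}) (P Q : pg_point F) (l : pg_line F).

Definition blockingb A := [forall l, [exists p in A, incident p l]].

Lemma blockingP A : reflect (blocking_set A) (blockingb A).
Proof.
apply: (iffP forallP) => [bA l|bA l]; first by have /exists_inP[p] := bA l; exists p.
by have [p pA pl] := bA l; apply/exists_inP; exists p.
Qed.

Lemma blocking_setS A B : A \subset B -> blocking_set A -> blocking_set B.
Proof. by move=> sAB bA l; have [p pA pl] := bA l; exists p; rewrite ?(subsetP sAB). Qed.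

Lemma blocking_setD1_incident A Q l :
  blocking_set A -> {in A :\ Q, forall x, ~~ incident x l} -> incident Q l.
Proof.
move=> /(_ l)[x xA xl] missl; have [<- //|xQ] := eqVneq x Q.
by move: (missl x); rewrite !inE xQ xA xl => /(_ isT).
Qed.

Lemma blocking_setD2 C P Q : (#|C| <= 2 * #|F|)%N -> P != Q -> P \in C -> Q \in C ->
  blocking_set (C :\ P) -> blocking_set (C :\ Q) -> blocking_set (C :\ P :\ Q).
Proof.
move=> le_C neq_PQ PC QC bP bQ; set D := C :\ P :\ Q.
apply/blockingP; apply: contraT; rewrite negb_forall => /existsP[l0].
rewrite negb_exists_in => /forall_inP missD0.
have through l : {in D, forall x, ~~ incident x l} -> incident P l /\ incident Q l.
  move=> missD; split; last exact: blocking_setD1_incident bP missD.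
  apply: blocking_setD1_incident bQ _.
  by have -> : C :\ Q :\ P = D by rewrite /D !setDDl setUC.
have meetD l : l != l0 -> exists2 x, x \in D & incident x l.
  move=> neq_ll0; apply/exists_inP; apply: contraNT neq_ll0.
  rewrite negb_exists_in => /forall_inP /through[Pl Ql].
  by have [Pl0 Ql0] := through l0 missD0; rewrite (incident2_eq neq_PQ Pl Ql Pl0 Ql0).
have := affine_blocking_set_card missD0 meetD.
have card_C : #|C| = #|D|.+2.
  by rewrite (cardsD1 P) PC (cardsD1 Q (C :\ P)) !inE eq_sym neq_PQ QC.
by move: le_C; rewrite card_C; lia.
Qed.

Lemma minimal_blocking_sub_eq M N :
  M \subset N -> blocking_set M -> minimal_blocking_set N -> M = N.
Proof.
move=> sMN bM [_ minN]; apply/eqP; apply: contraT => neq_MN.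
by case: (minN M) => //; rewrite properEneq neq_MN.
Qed.

Lemma exists_minimal_blocking_subset B : blocking_set B ->
  exists M, M \subset B /\ minimal_blocking_set M.
Proof.
move=> bB; have [|M minM] := @ex_minset _ (fun A => (A \subset B) && blockingb A).
  by exists B; rewrite subxx; apply/blockingP.
have /andP[sMB /blockingP bM] := minsetp minM.
exists M; split => //; split => // A ltAM bA.
have sAM := proper_sub ltAM.
have AM : A = M.
  by apply: (minsetinf minM) => //; rewrite (subset_trans sAM sMB); apply/blockingP.
by rewrite AM properxx in ltAM.
Qed.

Lemma minimal_blocking_subset_unique C M1 M2 : (#|C| <= 2 * #|F|)%N ->
  M1 \subset C -> M2 \subset C ->
  minimal_blocking_set M1 -> minimal_blocking_set M2 -> M1 = M2.
Proof.
have [n] := ubnP #|C|; elim: n C M1 M2 => // n IH C M1 M2.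
rewrite ltnS => le_Cn le_C sM1C sM2C minM1 minM2.
apply/eqP; apply: contraT => neq_M12.
have notsub A B : minimal_blocking_set A -> minimal_blocking_set B -> A != B ->
    exists2 P, P \in A & P \notin B.
  move=> [bA _] minB neq_AB; apply/subsetPn; apply: contra neq_AB => sAB.
  by rewrite (minimal_blocking_sub_eq sAB bA minB).
have [P PM1 PM2] := notsub _ _ minM1 minM2 neq_M12.
have [Q QM2 QM1] := notsub _ _ minM2 minM1 (contra_neq esym neq_M12).
have PC : P \in C := subsetP sM1C P PM1.
have QC : Q \in C := subsetP sM2C Q QM2.
have neq_PQ : P != Q by apply: contraNneq QM1 => <-.
have sM2P : M2 \subset C :\ P by rewrite subsetD1 sM2C PM2.
have sM1Q : M1 \subset C :\ Q by rewrite subsetD1 sM1C QM1.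
have [N [sND minN]] : exists N, N \subset C :\ P :\ Q /\ minimal_blocking_set N.
  apply/exists_minimal_blocking_subset/blocking_setD2 => //.
    exact: blocking_setS sM2P minM2.1.
  exact: blocking_setS sM1Q minM1.1.
move: sND; rewrite !subsetD1 => /andP[/andP[sNC PN] QN].
have IHD S : S \in C -> N \subset C :\ S -> forall M, M \subset C :\ S ->
    minimal_blocking_set M -> M = N.
  move=> SC sNS M sMS minM; apply: IH sMS sNS minM minN.
    by move: le_Cn; rewrite (cardsD1 S) SC.
  exact: leq_trans (subset_leq_card (subD1set C S)) le_C.
have M2N : M2 = N by apply: (IHD P) => //; rewrite subsetD1 sNC.
have M1N : M1 = N by apply: (IHD Q) => //; rewrite subsetD1 sNC.
by rewrite M1N M2N eqxx in neq_M12.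
Qed.

End BlockingSets.

Theorem mainTheorem14 (F : finFieldType) (B : {set pg_point F}) :
  blocking_set B -> (#|B| <= 2 * #|F|)%N ->
  exists! M : {set pg_point F}, M \subset B /\ minimal_blocking_set M.
Proof.
move=> bB le_B; have [M [sMB minM]] := exists_minimal_blocking_subset bB.
exists M; split=> // M' [sM'B minM'].
exact: minimal_blocking_subset_unique le_B sMB sM'B minM minM'.
Qed.
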